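(* Let $F$ be a field of characteristic $2$, let $\phi$ be an anisotropic quasilinear quadratic form over $F$, let $K$ be a purely transcendental field extension of $F$, and let $r$ be a positive integer. If $\phi_K$ is divisible by an $r$-fold quasi-Pfister form over $K$, then $\phi$ is divisible by an $r$-fold quasi-Pfister form over $F$.
   Context: A quasilinear quadratic form over a field of characteristic 2 is a quadratic form $\phi$ on a finite-dimensional space with $\phi(v+w)=\phi(v)+\phi(w)$. The $r$-fold quasi-Pfister form $\langle\langle a_1,\dots,a_r\rangle\rangle$ is $\sum_{S\subseteq\{1,\dots,r\}}(\prod_{j\in S}a_j)x_S^2$. $\phi$ is divisible by $\pi$ if $\phi\simeq\pi\otimes\sigma$ for some quasilinear quadratic form $\sigma$. *)

From HB Require Import structures.
From mathcomp Require Import all_boot all_order all_algebra.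
From mathcomp Require Import mpoly.
Set Implicit Arguments. Unset Strict Implicit. Unset Printing Implicit Defensive.
Import GRing.Theory.
Local Open Scope ring_scope.

(* A quasilinear quadratic form in char 2 is diagonal in any basis:
   phi(sum x_i e_i) = sum x_i^2 phi(e_i).  We represent the form
   <a_1,...,a_n> by the sequence of its coefficients. *)

Definition qf {R : pzRingType} (a : seq R) {n : nat} (x : 'rV[R]_n) : R :=
  \sum_(i < n) a`_i * (x 0 i) ^+ 2.

Definition qf_iso {F : fieldType} (a b : seq F) : Prop :=
  size a = size b /\
  exists2 A : 'M[F]_(size a), A \in unitmx &
    forall x : 'rV[F]_(size a), qf b (x *m A) = qf a x.

Definition anisotropic {F : fieldType} (a : seq F) : Prop :=
  forall x : 'rV[F]_(size a), qf a x = 0 -> x = 0.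

Definition qf_tensor {R : pzRingType} (a b : seq R) : seq R :=
  [seq x * y | x <- a, y <- b].

Definition quasi_pfister {R : comPzRingType} (r : nat) (a : 'I_r -> R) : seq R :=
  [seq \prod_(j in J) a j | J : {set 'I_r}].

Definition qf_divisible {F : fieldType} (phi pi : seq F) : Prop :=
  exists sigma : seq F, qf_iso phi (qf_tensor pi sigma).

Definition divisible_by_rfold_qpfister {F : fieldType} (phi : seq F) (r : nat)
  : Prop := exists a : 'I_r -> F, qf_divisible phi (quasi_pfister a).

(* K / iota(F) is purely transcendental: K is generated as a field over
   iota(F) by an algebraically independent family (t_i)_{i in I}. *)
Definition purely_transcendental {F K : fieldType} (iota : {rmorphism F -> K})
  : Prop :=
  exists (I : Type) (t : I -> K),
    (forall (n : nat) (f : 'I_n -> I), injective f ->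
       forall p : {mpoly F[n]}, p != 0 ->
         (map_mpoly iota p).@[fun i => t (f i)] != 0)
    /\
    (forall P : K -> Prop,
       (forall c, P (iota c)) -> (forall i, P (t i)) ->
       (forall x y, P x -> P y -> P (x - y)) ->
       (forall x y, P x -> P y -> P (x * y)) ->
       (forall x, P x -> P x^-1) ->
       forall x, P x).

From HB Require Import structures.
From mathcomp Require Import all_boot all_order all_algebra.
From mathcomp Require Import mpoly.
From Stdlib Require Import Classical.
From mathcomp Require Import ring.
Set Implicit Arguments. Unset Strict Implicit. Unset Printing Implicit Defensive.
Import GRing.Theory.
Local Open Scope ring_scope.

(* Write phi = <a_0, ..., a_(n-1)>, let D(phi) be its value set, an F^2-subspace of F,
   and S(phi) = {c | c D(phi) ⊆ D(phi)} its field of multipliers. An anisotropic phi is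
   divisible by an r-fold quasi-Pfister form iff S(phi) contains 2^r elements forming an
   anisotropic form: these generate a quasi-Pfister subfield E of S(phi), and D(phi) is a
   free E-module.
   Choose an anisotropic extension phi ⊥ phi' representing every a_0^-1 a_k a_i. Writing
   c = a_0^-1 phi(y), c lies in S(phi) iff the phi'-coordinates of the vectors representing
   the c a_i vanish, an F-linear condition on y. Hence the largest anisotropic form with
   entries in S(phi) has the dimension of the solution space of a linear system over F.
   This dimension does not change under K/F, and phi ⊥ phi' stays anisotropic over the
   purely transcendental K (compare coefficients of the squares of polynomials), so the
   same system computes the bound over K. *)

Section Char2.
Variables (R : comNzRingType) (ch : 2%N \in [pchar R]).

Lemma sqrrD_pchar2 (x y : R) : (x + y) ^+ 2 = x ^+ 2 + y ^+ 2.
Proof. exact: (pFrobenius_autD_comm ch (mulrC x y)). Qed.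

Lemma sqr_sum_pchar2 (I : Type) (r : seq I) (P : pred I) (f : I -> R) :
  (\sum_(i <- r | P i) f i) ^+ 2 = \sum_(i <- r | P i) f i ^+ 2.
Proof. exact: (rmorph_sum (pFrobenius_aut ch)). Qed.

End Char2.

Lemma nth_map0 (R : zmodType) (S : zmodType) (f : R -> S) (s : seq R) i :
  f 0 = 0 -> (map f s)`_i = f s`_i.
Proof.
move=> f0; have [lt_i|le_i] := ltnP i (size s); first by rewrite (nth_map 0).
by rewrite !nth_default ?size_map.
Qed.

Lemma kermx_witness (R : fieldType) m n (M : 'M[R]_(m, n)) :
  ~~ row_free M -> exists2 v : 'rV_m, v != 0 & v *m M = 0.
Proof. by rewrite -kermx_eq0 => /rowV0Pn [v /sub_kermxP vM nz]; exists v. Qed.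

Definition joint_rsubmx (R : fieldType) n m (Zs : 'I_n -> 'M[R]_(n, n + m)) :
    'M[R]_(n, n * m) :=
  \matrix_(k, j) mxvec (\matrix_(i, l) rsubmx (Zs i) k l) 0 j.

Lemma joint_rsubmxE (R : fieldType) n m (Zs : 'I_n -> 'M[R]_(n, n + m)) (y : 'rV_n) i l :
  (y *m joint_rsubmx Zs) 0 (mxvec_index i l) = rsubmx (y *m Zs i) 0 l.
Proof. by rewrite -mulmx_rsub !mxE; apply: eq_bigr => k _; rewrite !mxE mxvecE !mxE. Qed.

Lemma joint_rsubmx_eq0 (R : fieldType) n m (Zs : 'I_n -> 'M[R]_(n, n + m)) (y : 'rV_n) :
  y *m joint_rsubmx Zs = 0 <-> forall i, rsubmx (y *m Zs i) = 0.
Proof.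
split=> [yZ i|yZ]; apply/rowP.
  by move=> l; rewrite -joint_rsubmxE yZ !mxE.
by case/mxvec_indexP=> i l; rewrite joint_rsubmxE yZ !mxE.
Qed.

Lemma map_joint_rsubmx (R S : fieldType) (f : {rmorphism R -> S}) n m
    (Zs : 'I_n -> 'M[R]_(n, n + m)) :
  map_mx f (joint_rsubmx Zs) = joint_rsubmx (fun i => map_mx f (Zs i)).
Proof. by apply/matrixP => k; case/mxvec_indexP=> i l; rewrite !mxE !mxvecE !mxE. Qed.

Section QuasilinearForm.
Variables (R : fieldType) (ch : 2%N \in [pchar R]).
Implicit Types (a b phi E s vs ws : seq R) (c u v y : R).

Lemma qf0 a n : qf a (0 : 'rV_n) = 0.
Proof. by rewrite /qf big1 // => i _; rewrite mxE expr0n mulr0. Qed.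

Lemma qfD a n (x y : 'rV_n) : qf a (x + y) = qf a x + qf a y.
Proof.
by rewrite /qf -big_split; apply: eq_bigr => i _; rewrite mxE sqrrD_pchar2 // mulrDr.
Qed.

Lemma qfZ a n c (x : 'rV_n) : qf a (c *: x) = c ^+ 2 * qf a x.
Proof. by rewrite /qf mulr_sumr; apply: eq_bigr => i _; rewrite mxE exprMn mulrCA. Qed.

Lemma qf_delta a n (i : 'I_n) : qf a (delta_mx 0 i) = a`_i.
Proof.
rewrite /qf (bigD1 i) //= big1 => [|j /negbTE ji].
  by rewrite mxE !eqxx expr1n mulr1 addr0.
by rewrite mxE ji andbF expr0n mulr0.
Qed.

Lemma qf_scale a c n (x : 'rV_n) : qf [seq p * c | p <- a] x = c * qf a x.
Proof.
rewrite /qf mulr_sumr; apply: eq_bigr => i _.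
by rewrite (nth_map0 (f := fun p => p * c)) ?mul0r // mulrAC mulrC.
Qed.

Lemma qf_cat a b (z : 'rV_(size a + size b)) :
  qf (a ++ b) z = qf a (lsubmx z) + qf b (rsubmx z).
Proof.
rewrite /qf big_split_ord /=; congr (_ + _); apply: eq_bigr => i _;
  rewrite nth_cat mxE /=; first by rewrite ltn_ord.
by rewrite ltnNge leq_addr /= addKn.
Qed.

Lemma qf_mulmx a b m n (Z : 'M_(m, n)) (x : 'rV_m) :
  (forall j : 'I_m, b`_j = qf a (row j Z)) -> qf a (x *m Z) = qf b x.
Proof.
move=> bZ; rewrite /qf.
under eq_bigr => i _ do rewrite mxE sqr_sum_pchar2 // mulr_sumr.
rewrite exchange_big /=; apply: eq_bigr => j _.
rewrite bZ /qf mulr_suml; apply: eq_bigr => i _.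
by rewrite !mxE exprMn mulrCA mulrC.
Qed.

Lemma qf_map (S : fieldType) (f : {rmorphism R -> S}) a n (x : 'rV_n) :
  qf (map f a) (map_mx f x) = f (qf a x).
Proof.
rewrite /qf rmorph_sum; apply: eq_bigr => i _.
by rewrite (nth_map0 _ _ (rmorph0 f)) mxE rmorphM rmorphXn.
Qed.

Lemma anisotropicE n a : n = size a ->
  anisotropic a <-> forall x : 'rV_n, qf a x = 0 -> x = 0.
Proof. by move->. Qed.

Lemma anisotropic_neq0 a x : anisotropic a -> x \in a -> x != 0.
Proof.
move=> an_a xa; have i_lt : (index x a < size a)%N by rewrite index_mem.
apply/eqP => x0; pose i := Ordinal i_lt.
have ai : a`_i = 0 by rewrite /= nth_index.
have := an_a (delta_mx 0 i); rewrite qf_delta ai => /(_ erefl) /matrixP /(_ 0 i).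
by rewrite !mxE !eqxx => /eqP; rewrite oner_eq0.
Qed.

Lemma anisotropic_catl a b : anisotropic (a ++ b) -> anisotropic a.
Proof.
move=> /(anisotropicE (esym (size_cat a b))) an_ab x qx.
have := an_ab (row_mx x 0).
rewrite qf_cat row_mxKl row_mxKr qf0 qx addr0 => /(_ erefl) /eqP.
by rewrite row_mx_eq0 => /andP [/eqP].
Qed.

Lemma anisotropic_scale a c : anisotropic [seq p * c | p <- a] -> anisotropic a.
Proof.
move=> an_ac; apply/(anisotropicE (size_map _ _)) => x qx.
by apply: an_ac; rewrite qf_scale qx mulr0.
Qed.

Lemma anisotropic1 : anisotropic [:: 1 : R].
Proof.
move=> x; rewrite /qf big_ord1 /= mul1r => /eqP.
by rewrite sqrf_eq0 => /eqP x0; apply/rowP => i; rewrite ord1 x0 mxE.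
Qed.

Definition represents a c : Prop := exists x : 'rV_(size a), qf a x = c.

Lemma representsE n a c : n = size a ->
  represents a c <-> exists z : 'rV_n, qf a z = c.
Proof. by move->. Qed.

Lemma represents0 a : represents a 0.
Proof. by exists 0; rewrite qf0. Qed.

Lemma representsD a u v : represents a u -> represents a v -> represents a (u + v).
Proof. by move=> [x <-] [y <-]; exists (x + y); rewrite qfD. Qed.

Lemma representsZ a c u : represents a u -> represents a (c ^+ 2 * u).
Proof. by move=> [x <-]; exists (c *: x); rewrite qfZ. Qed.

Lemma represents_sum a (I : Type) (r : seq I) (P : pred I) (f : I -> R) :
  (forall i, P i -> represents a (f i)) -> represents a (\sum_(i <- r | P i) f i).
Proof.
move=> h; apply: (big_ind (represents a)) => //; [exact: represents0 | exact: representsD].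
Qed.

Lemma represents_mem a x : x \in a -> represents a x.
Proof.
move=> xa; have i_lt : (index x a < size a)%N by rewrite index_mem.
by exists (delta_mx 0 (Ordinal i_lt)); rewrite qf_delta /= nth_index.
Qed.

Lemma represents_scale a b c u :
  (forall x, x \in a -> represents b (c * x)) -> represents a u -> represents b (c * u).
Proof.
move=> h [x <-]; rewrite /qf mulr_sumr; apply: represents_sum => i _.
by rewrite mulrA mulrC; apply/representsZ/h/mem_nth.
Qed.

Lemma represents_trans a b u :
  (forall x, x \in a -> represents b x) -> represents a u -> represents b u.
Proof.
move=> h au; rewrite -[u]mul1r; apply: represents_scale au => x xa.
by rewrite mul1r; exact: h.
Qed.

Lemma represents_rows a n m (f : 'I_m -> R) : n = size a ->
  (forall j, represents a (f j)) ->
  exists Z : 'M_(m, n), forall j, qf a (row j Z) = f j.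
Proof.
move=> -> /fin_all_exists [g gf]; exists (\matrix_(j, i) g j 0 i) => j.
by rewrite -gf; congr qf; apply/rowP => i; rewrite !mxE.
Qed.

Lemma anisotropic_size_le a b : anisotropic b ->
  (forall x, x \in b -> represents a x) -> (size b <= size a)%N.
Proof.
move=> an_b ab; have [Z Zb] := represents_rows erefl (fun j : 'I_(size b) =>
  ab _ (mem_nth 0 (ltn_ord j))).
rewrite leqNgt; apply/negP => lt_ab.
have /kermx_witness [v v_neq0 vZ] : ~~ row_free Z.
  by rewrite /row_free neq_ltn (leq_ltn_trans (rank_leq_col Z) lt_ab).
move: v_neq0; rewrite (an_b v) ?eqxx //.
by rewrite -(@qf_mulmx a b _ _ Z) ?vZ ?qf0 // => j; rewrite Zb.
Qed.

Lemma anisotropic_represents a b : size a = size b -> anisotropic b ->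
  (forall x, x \in b -> represents a x) -> anisotropic a.
Proof.
move=> eq_ab an_b ab.
have [Z Zb] := represents_rows erefl (fun j : 'I_(size a) =>
  ab _ (mem_nth 0 (leq_trans (ltn_ord j) (eq_leq eq_ab)))).
have qZ x : qf a (x *m Z) = qf b x by apply: qf_mulmx => j; rewrite Zb.
have {}an_b := (anisotropicE eq_ab).1 an_b.
have uZ : Z \in unitmx.
  rewrite -row_free_unit; apply/negPn/negP => /kermx_witness [v v_neq0 vZ].
  by move: v_neq0; rewrite (an_b v) ?eqxx // -qZ vZ qf0.
move=> x qx; have := an_b (x *m invmx Z); rewrite -qZ mulmxKV // => /(_ qx) x0.
by rewrite -(mulmxKV uZ x) x0 mul0mx.
Qed.

Lemma anisotropic_perm a b : perm_eq a b -> anisotropic a -> anisotropic b.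
Proof.
move=> ab an_a; apply: anisotropic_represents an_a _; first by rewrite (perm_size ab).
by move=> x; rewrite (perm_mem ab); exact: represents_mem.
Qed.

Lemma qf_iso_represents a b : qf_iso a b ->
  (forall x, x \in a -> represents b x) /\ (forall x, x \in b -> represents a x).
Proof.
case=> eq_ab [A uA qA]; split=> x /represents_mem.
  by move=> [y <-]; apply/(representsE _ eq_ab); exists (y *m A); rewrite qA.
by move=> /(representsE _ eq_ab) [y <-]; exists (y *m invmx A); rewrite -qA mulmxKV.
Qed.

Lemma anisotropic_qf_iso a b : qf_iso a b -> anisotropic a -> anisotropic b.
Proof.
move=> iso_ab an_a; apply: anisotropic_represents an_a (qf_iso_represents iso_ab).1.
by case: iso_ab.
Qed.

Lemma qf_iso_of_represents a b : anisotropic a -> anisotropic b ->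
  (forall x, x \in a -> represents b x) -> (forall x, x \in b -> represents a x) ->
  qf_iso a b.
Proof.
move=> an_a an_b ab ba.
have eq_ab : size a = size b by apply/eqP; rewrite eqn_leq !anisotropic_size_le.
split => //; have [Z Za] := represents_rows eq_ab (fun j : 'I_(size a) =>
  ab _ (mem_nth 0 (ltn_ord j))).
have qZ x : qf b (x *m Z) = qf a x by apply: qf_mulmx => j; rewrite Za.
exists Z => //; rewrite -row_free_unit; apply/negPn/negP => /kermx_witness [v v_neq0 vZ].
by move: v_neq0; rewrite (an_a v) ?eqxx // -qZ vZ qf0.
Qed.

Lemma represents_cat_scale a b x c :
  represents (a ++ [seq p * x | p <- b]) c <->
  exists u v, [/\ represents a u, represents b v & c = u + v * x].
Proof.
have eq_b : size [seq p * x | p <- b] = size b by rewrite size_map.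
rewrite (@representsE (size a + size [seq p * x | p <- b])) ?size_cat //; split.
  move=> [z <-]; exists (qf a (lsubmx z)), (qf b (rsubmx z)).
  rewrite qf_cat qf_scale mulrC; split => //; first by exists (lsubmx z).
  by apply/(representsE _ eq_b); exists (rsubmx z).
move=> [u [v [[z1 <-] /(representsE _ eq_b) [z2 <-] ->]]].
by exists (row_mx z1 z2); rewrite qf_cat qf_scale row_mxKl row_mxKr mulrC.
Qed.

Lemma anisotropic_cat_scale a b x : anisotropic a -> anisotropic b ->
  (forall p l, represents b p -> represents a l -> represents a (p * l)) ->
  ~ represents a x -> anisotropic (a ++ [seq p * x | p <- b]).
Proof.
move=> an_a an_b ab_a ax.
have eq_b : size [seq p * x | p <- b] = size b by rewrite size_map.
apply/(@anisotropicE (size a + size [seq p * x | p <- b])); first by rewrite size_cat.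
move=> z; rewrite qf_cat qf_scale => qz.
have qb0 : qf b (rsubmx z) = 0.
  have [//|qb_neq0] := eqVneq (qf b (rsubmx z)) 0; case: ax.
  have -> : x = (qf b (rsubmx z))^-1 * qf a (lsubmx z).
    by move/eqP: qz; rewrite addr_eq0 oppr_pchar2 // => /eqP ->; rewrite [x * _]mulrC mulKf.
  apply: ab_a; last by exists (lsubmx z).
  rewrite -[_^-1](@mulfVK _ (qf b (rsubmx z))) // -expr2.
  by apply/representsZ/(representsE _ eq_b); exists (rsubmx z).
have z2 : rsubmx z = 0 by apply: ((anisotropicE eq_b).1 an_b).
have z1 : lsubmx z = 0 by apply: an_a; move: qz; rewrite qb0 mulr0 addr0.
by rewrite -(hsubmxK z) z1 z2 row_mx0.
Qed.

Lemma represents_tensor a vs e v :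
  represents a e -> v \in vs -> represents (qf_tensor a vs) (e * v).
Proof.
move=> ae v_vs; rewrite mulrC; apply: represents_scale ae => x xa.
by rewrite mulrC; apply/represents_mem/allpairs_f.
Qed.

Lemma represents_tensor_mono a b vs : (forall x, x \in a -> represents b x) ->
  forall z, z \in qf_tensor a vs -> represents (qf_tensor b vs) z.
Proof.
move=> ab _ /allpairsP [[x v] [/= xa v_vs ->]].
exact: represents_tensor (ab x xa) v_vs.
Qed.

Fixpoint qpfister (s : seq R) : seq R :=
  if s is x :: s' then qpfister s' ++ [seq p * x | p <- qpfister s'] else [:: 1].

Lemma size_qpfister s : size (qpfister s) = (2 ^ size s)%N.
Proof. by elim: s => //= x s IH; rewrite size_cat size_map IH expnS mul2n addnn. Qed.

Lemma represents_qpfister1 s : represents (qpfister s) 1.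
Proof.
elim: s => [|x s IH] /=; first by apply: represents_mem; rewrite mem_seq1.
by apply/represents_cat_scale; exists 1, 0; rewrite mul0r addr0; split => //; apply: represents0.
Qed.

Lemma represents_qpfisterM s p q :
  represents (qpfister s) p -> represents (qpfister s) q -> represents (qpfister s) (p * q).
Proof.
elim: s p q => [|x s IH] p q /=.
  move=> [z <-] [w <-]; exists (\row_i (z 0 0 * w 0 0)).
  by rewrite /qf !big_ord1 /= mxE !mul1r exprMn.
move=> /represents_cat_scale [u [v [su sv ->]]] /represents_cat_scale [u' [v' [su' sv' ->]]].
apply/represents_cat_scale; exists (u * u' + x ^+ 2 * (v * v')), (u * v' + v * u').
split.
- by apply: representsD; [exact: IH | apply/representsZ/IH].
- by apply: representsD; exact: IH.
- by rewrite expr2; ring.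
Qed.

Lemma represents_qpfister_mem s y : y \in s -> represents (qpfister s) y.
Proof.
elim: s => [|x s IH] //= ys; apply/represents_cat_scale.
move: ys; rewrite in_cons => /predU1P [->|ys].
  exists 0, 1; rewrite add0r mul1r.
  by split; [exact: represents0 | exact: represents_qpfister1 |].
by exists y, 0; rewrite mul0r addr0; split; [exact: IH | exact: represents0 |].
Qed.

Lemma qpfister_ind (W : R -> Prop) s : W 1 ->
  (forall c y, W c -> y \in s -> W (c * y)) -> forall c, c \in qpfister s -> W c.
Proof.
elim: s => [|x s IH] W1 WM c /=; first by rewrite mem_seq1 => /eqP ->.
have {}IH : forall c, c \in qpfister s -> W c.
  by apply: IH => // c' y Wc ys; apply: WM => //; rewrite in_cons ys orbT.
rewrite mem_cat => /orP [/IH //|/mapP [p /IH Wp ->]].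
by apply: WM => //; exact: mem_head.
Qed.

Lemma size_quasi_pfister r (b : 'I_r -> R) : size (quasi_pfister b) = (2 ^ r)%N.
Proof.
by rewrite /quasi_pfister size_image -cardsT -powersetT card_powerset cardsT card_ord.
Qed.

Lemma quasi_pfister_mem r (b : 'I_r -> R) (J : {set 'I_r}) :
  \prod_(j in J) b j \in quasi_pfister b.
Proof. by apply: map_f; rewrite mem_enum. Qed.

Lemma quasi_pfisterP r (b : 'I_r -> R) z :
  z \in quasi_pfister b -> exists J : {set 'I_r}, z = \prod_(j in J) b j.
Proof. by move=> /imageP [J _ ->]; exists J. Qed.

Lemma represents_quasi_pfisterMl r (b : 'I_r -> R) j u :
  represents (quasi_pfister b) u -> represents (quasi_pfister b) (b j * u).
Proof.
apply: represents_scale => x /quasi_pfisterP [J ->].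
have [jJ|jNJ] := boolP (j \in J).
  rewrite (big_setD1 _ jJ) /= mulrA -expr2.
  by apply/representsZ/represents_mem/quasi_pfister_mem.
by rewrite -(big_setU1 _ jNJ); apply/represents_mem/quasi_pfister_mem.
Qed.

(* Since the value set D(a) of [qf a] is the R^2-span of the entries of [a],
   this says c D(a) ⊆ D(a). *)
Definition multiplier a c : Prop := forall y, y \in a -> represents a (c * y).

Lemma multiplier1 a : multiplier a 1.
Proof. by move=> y ya; rewrite mul1r; exact: represents_mem. Qed.

Lemma multiplierM a c d : multiplier a c -> multiplier a d -> multiplier a (c * d).
Proof.
move=> ac ad y ya; rewrite -mulrA.
by apply: represents_scale (ad y ya) => x xa; exact: ac.
Qed.

Lemma qpfister_multipliers phi e r : anisotropic e -> (2 ^ r <= size e)%N ->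
  (forall c, c \in e -> multiplier phi c) ->
  exists s, [/\ size s = r, anisotropic (qpfister s) &
    forall c, c \in qpfister s -> multiplier phi c].
Proof.
move=> an_e le_e mult_e.
suff [s [size_s an_s mult_s]] : exists s, [/\ size s = r, anisotropic (qpfister s) &
    forall y, y \in s -> multiplier phi y].
  exists s; split => //; apply: qpfister_ind; first exact: multiplier1.
  by move=> c y mc ys; apply: multiplierM (mult_s y ys).
elim: r le_e => [|k IH] le_e; first by exists [::]; split => //; exact: anisotropic1.
have [|s [size_s an_s mult_s]] := IH; first by rewrite (leq_trans _ le_e) ?leq_exp2l.
have [[x [xe sx]]|all_rep] := classic (exists x, x \in e /\ ~ represents (qpfister s) x).
  exists (x :: s); split => /=; [by rewrite size_s | |].
    by apply: anisotropic_cat_scale => //; exact: represents_qpfisterM.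
  by move=> y /predU1P [->|]; [exact: mult_e | exact: mult_s].
have e_s : forall x, x \in e -> represents (qpfister s) x.
  by move=> x xe; apply: NNPP => sx; apply: all_rep; exists x.
have := anisotropic_size_le an_e e_s; rewrite size_qpfister size_s.
by move=> /(leq_trans le_e); rewrite leq_exp2l // ltnn.
Qed.

Lemma represents_tensorMl E vs p l :
  (forall p q, represents E p -> represents E q -> represents E (p * q)) ->
  represents E p -> represents (qf_tensor E vs) l -> represents (qf_tensor E vs) (p * l).
Proof.
move=> closedE pE; apply: represents_scale => _ /allpairsP [[x v] [/= xE vs_v ->]].
by rewrite mulrA; apply: represents_tensor vs_v; apply: closedE pE (represents_mem xE).
Qed.

Lemma tensor_rcons_perm E vs y :
  perm_eq (qf_tensor E (rcons vs y)) (qf_tensor E vs ++ [seq x * y | x <- E]).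
Proof. by apply/permPl; exact: allpairs_rconsr. Qed.

(* [phi] is a free module over the field spanned by [E]; the basis [vs] is
   built greedily, and the anisotropy of [phi] bounds its length. *)
Lemma tensor_basis_of_multipliers phi E : anisotropic phi -> anisotropic E ->
  (0 < size E)%N ->
  (forall p q, represents E p -> represents E q -> represents E (p * q)) ->
  (forall c, c \in E -> multiplier phi c) ->
  exists vs, [/\ anisotropic (qf_tensor E vs),
    forall z, z \in qf_tensor E vs -> represents phi z &
    forall y, y \in phi -> represents (qf_tensor E vs) y].
Proof.
move=> an_phi an_E E_gt0 closedE mult_E.
suff /(_ (size phi).+1) [vs [an_T T_phi [le_T|phi_T]]] : forall N, exists vs,
  [/\ anisotropic (qf_tensor E vs), forall z, z \in qf_tensor E vs -> represents phi z &
   (N <= size (qf_tensor E vs))%N \/ forall y, y \in phi -> represents (qf_tensor E vs) y].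
- by have := anisotropic_size_le an_T T_phi; rewrite leqNgt le_T.
- by exists vs.
elim => [|N [vs [an_T T_phi grow]]].
  exists [::]; rewrite /qf_tensor allpairs0r; split => //; last by left.
  by move=> x _; apply/rowP => -[].
have [phi_T|] := classic (forall y, y \in phi -> represents (qf_tensor E vs) y).
  by exists vs; split => //; right.
move=> phiNT; have [y y_phi yNT] : exists2 y, y \in phi & ~ represents (qf_tensor E vs) y.
  by apply: NNPP => none; apply: phiNT => y y_phi; apply: NNPP => yNT; apply: none; exists y.
have {grow} le_T : (N <= size (qf_tensor E vs))%N by case: grow => // /(_ y y_phi).
exists (rcons vs y); have perm_T := tensor_rcons_perm E vs y.
split; last (left; rewrite (perm_size perm_T)).
- apply: (anisotropic_perm (a := qf_tensor E vs ++ [seq x * y | x <- E])).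
    by rewrite perm_sym.
  by apply: anisotropic_cat_scale => // p l; exact: represents_tensorMl.
- move=> z; rewrite (perm_mem perm_T) mem_cat => /orP [/T_phi //|/mapP [x xE ->]].
  exact: mult_E.
- by rewrite size_cat size_map -addn1 leq_add.
Qed.

Lemma divisible_of_multipliers phi e r : anisotropic phi -> anisotropic e ->
  (2 ^ r <= size e)%N -> (forall c, c \in e -> multiplier phi c) ->
  divisible_by_rfold_qpfister phi r.
Proof.
move=> an_phi an_e le_e mult_e.
have [s [size_s an_E mult_E]] := qpfister_multipliers an_e le_e mult_e.
have E_gt0 : (0 < size (qpfister s))%N by rewrite size_qpfister expn_gt0.
have [vs [an_L L_phi phi_L]] :=
  tensor_basis_of_multipliers an_phi an_E E_gt0 (@represents_qpfisterM s) mult_E.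
pose b (j : 'I_r) := s`_j.
have pi_E u : u \in quasi_pfister b -> represents (qpfister s) u.
  move=> /quasi_pfisterP [J ->]; apply: (big_ind (represents (qpfister s))).
  - exact: represents_qpfister1.
  - exact: represents_qpfisterM.
  by move=> j _; apply/represents_qpfister_mem/mem_nth; rewrite size_s.
have E_pi : forall p, p \in qpfister s -> represents (quasi_pfister b) p.
  apply: qpfister_ind => [|c y pi_c ys].
    by apply: represents_mem; have := quasi_pfister_mem b set0; rewrite big_set0.
  have i_lt : (index y s < r)%N by rewrite -size_s index_mem.
  by have := represents_quasi_pfisterMl (Ordinal i_lt) pi_c; rewrite /b /= nth_index // mulrC.
have an_T : anisotropic (qf_tensor (quasi_pfister b) vs).
  apply: anisotropic_represents _ an_L (represents_tensor_mono E_pi).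
  by rewrite !size_allpairs size_quasi_pfister size_qpfister size_s.
exists b, vs; apply: qf_iso_of_represents => // x x_phi.
  exact: represents_trans (represents_tensor_mono E_pi) (phi_L x x_phi).
exact: represents_trans L_phi (represents_tensor_mono pi_E x_phi).
Qed.

Lemma multipliers_of_divisible phi r (b : 'I_r -> R) (s0 : R) s :
  anisotropic phi -> qf_iso phi (qf_tensor (quasi_pfister b) (s0 :: s)) ->
  anisotropic (quasi_pfister b) /\ forall c, c \in quasi_pfister b -> multiplier phi c.
Proof.
set pi := quasi_pfister b; set T := qf_tensor pi _ => an_phi iso_T.
have [phi_T T_phi] := qf_iso_represents iso_T.
split.
  have perm_T : perm_eq T ([seq x * s0 | x <- pi] ++ qf_tensor pi s).
    by apply/permPl; exact: perm_allpairs_consr.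
  have := anisotropic_perm perm_T (anisotropic_qf_iso iso_T an_phi).
  by move=> /anisotropic_catl /anisotropic_scale.
have T_closed j v : represents T v -> represents T (b j * v).
  apply: represents_scale => _ /allpairsP [[u t] [/= u_pi t_s ->]].
  by rewrite mulrA; apply: represents_tensor t_s; exact/represents_quasi_pfisterMl/represents_mem.
move=> _ /quasi_pfisterP [J ->] y y_phi; apply: represents_trans T_phi _.
have : forall v, represents T v -> represents T ((\prod_(j in J) b j) * v).
  apply: (big_ind (fun u => forall v, represents T v -> represents T (u * v))).
  - by move=> v; rewrite mul1r.
  - by move=> u1 u2 Tu1 Tu2 v Tv; rewrite -mulrA; apply/Tu1/Tu2.
  - by move=> j _; exact: T_closed.
by apply; exact: phi_T.
Qed.


Lemma anisotropic_extension a ws : anisotropic a ->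
  exists b, anisotropic (a ++ b) /\ forall w, w \in ws -> represents (a ++ b) w.
Proof.
elim: ws a => [|w ws IH] a an_a; first by exists [::]; rewrite cats0.
have [aw|aNw] := classic (represents a w).
  have [b [an_ab ws_ab]] := IH a an_a; exists b; split => // w' /predU1P [->|/ws_ab //].
  by apply: represents_trans aw => x xa; apply: represents_mem; rewrite mem_cat xa.
have an_aw : anisotropic (a ++ [seq p * w | p <- [:: 1]]).
  apply: anisotropic_cat_scale => //; first exact: anisotropic1.
  by move=> p l [x <-] al; rewrite /qf big_ord1 /= mul1r; apply: representsZ.
have [b [an_ab ws_ab]] := IH _ an_aw; exists (w :: b); rewrite -cat_rcons -cats1.
rewrite /= mul1r in an_aw an_ab ws_ab; split => // w' /predU1P [->|/ws_ab //].
by apply: represents_mem; rewrite !mem_cat mem_seq1 eqxx orbT.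
Qed.

Definition coord_products a b n m (Zs : 'I_n -> 'M_(n, n + m)) : Prop :=
  forall i k : 'I_n, qf (a ++ b) (row k (Zs i)) = (a`_0)^-1 * a`_k * a`_i.

Lemma coord_products_exist a : anisotropic a -> exists b
    (Zs : 'I_(size a) -> 'M_(size a, size a + size b)),
  anisotropic (a ++ b) /\ coord_products a b Zs.
Proof.
move=> an_a; have [b [an_ab ws_ab]] :=
  anisotropic_extension [seq (a`_0)^-1 * x * y | x <- a, y <- a] an_a.
suff /fin_all_exists [Zs Zs_coord] : forall i : 'I_(size a),
    exists Z : 'M_(size a, size a + size b),
      forall k, qf (a ++ b) (row k Z) = (a`_0)^-1 * a`_k * a`_i.
  by exists b, Zs.
move=> i; apply: represents_rows; first by rewrite size_cat.
by move=> k; apply/ws_ab/allpairs_f; exact: mem_nth.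
Qed.

Lemma represents_catl a b n m (z : 'rV_(n + m)) : n = size a -> m = size b ->
  anisotropic (a ++ b) -> represents a (qf (a ++ b) z) <-> rsubmx z = 0.
Proof.
move=> en em; subst n m => /(anisotropicE (esym (size_cat a b))) an_ab; split; last first.
  by move=> z2; exists (lsubmx z); rewrite qf_cat z2 qf0 addr0.
move=> [x qx]; have : z + row_mx x 0 = 0.
  apply: an_ab; rewrite qfD [qf _ (row_mx _ _)]qf_cat row_mxKl row_mxKr qf0 addr0 qx.
  exact: addrr_pchar2.
by move/eqP; rewrite addr_eq0 => /eqP ->; rewrite linearN /= row_mxKr oppr0.
Qed.

Section LinearDescription.
Variables (a b : seq R) (n m : nat) (Zs : 'I_n -> 'M[R]_(n, n + m)).
Hypotheses (en : n = size a) (em : m = size b).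
Hypotheses (an_ab : anisotropic (a ++ b)) (Zs_coord : coord_products a b Zs).

Lemma qf_coord_products (y : 'rV_n) (i : 'I_n) :
  (a`_0)^-1 * qf a y * a`_i = qf (a ++ b) (y *m Zs i).
Proof.
have f0 : (a`_0)^-1 * 0 * a`_i = 0 by rewrite mulr0 mul0r.
rewrite (@qf_mulmx _ [seq (a`_0)^-1 * x * a`_i | x <- a]); last first.
  by move=> k; rewrite Zs_coord (nth_map0 (f := fun x => (a`_0)^-1 * x * a`_i)).
rewrite /qf mulr_sumr mulr_suml; apply: eq_bigr => k _.
by rewrite (nth_map0 (f := fun x => (a`_0)^-1 * x * a`_i)) //; ring.
Qed.

Lemma multiplier_of_kernel (y : 'rV_n) :
  y *m joint_rsubmx Zs = 0 -> multiplier a ((a`_0)^-1 * qf a y).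
Proof.
move=> /joint_rsubmx_eq0 yZ x xa.
have i_lt : (index x a < n)%N by rewrite en index_mem.
have -> : x = a`_(Ordinal i_lt) by rewrite /= nth_index.
by rewrite qf_coord_products; apply/(represents_catl _ en em an_ab).
Qed.

Lemma a0_neq0 : (0 < n)%N -> a`_0 != 0.
Proof.
by rewrite en => n_gt0; apply: anisotropic_neq0 (anisotropic_catl an_ab) (mem_nth 0 n_gt0).
Qed.

Lemma kernel_of_multiplier c : (0 < n)%N -> multiplier a c ->
  exists2 y : 'rV_n, c = (a`_0)^-1 * qf a y & y *m joint_rsubmx Zs = 0.
Proof.
move=> n_gt0 mult_c; have a_n i : (i < n)%N -> a`_i \in a by rewrite en; exact: mem_nth.
have /(representsE _ en) [y qy] := mult_c _ (a_n 0%N n_gt0).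
have c_y : c = (a`_0)^-1 * qf a y by rewrite qy [c * _]mulrC mulKf ?a0_neq0.
exists y => //; apply/joint_rsubmx_eq0 => i; apply/(represents_catl _ en em an_ab).
by rewrite -qf_coord_products -c_y; apply/mult_c/a_n.
Qed.

Lemma anisotropic_row_free cs k (Y : 'M_(k, n)) : (0 < n)%N -> k = size cs ->
  (forall j : 'I_k, cs`_j = (a`_0)^-1 * qf a (row j Y)) ->
  anisotropic cs <-> row_free Y.
Proof.
move=> n_gt0 ek cs_Y.
have qY (v : 'rV_k) : qf a (v *m Y) = a`_0 * qf cs v.
  rewrite -qf_scale; apply: qf_mulmx => j.
  by rewrite (nth_map0 (f := fun p => p * a`_0)) ?mul0r // cs_Y mulrC mulVKf ?a0_neq0.
have an_a := (anisotropicE en).1 (anisotropic_catl an_ab).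
rewrite (anisotropicE ek); split => [an_cs|free_Y v qv].
  apply/negPn/negP => /kermx_witness [v /negP v_neq0 vY]; apply: v_neq0.
  by apply/eqP/an_cs/eqP; rewrite -(mulIr_eq0 _ (mulIf (a0_neq0 n_gt0))) mulrC -qY vY qf0.
apply: (row_free_inj free_Y); rewrite mul0mx; apply: an_a.
by rewrite qY qv mulr0.
Qed.

Lemma multipliers_size_le_rank cs : (0 < n)%N -> anisotropic cs ->
  (forall c, c \in cs -> multiplier a c) ->
  (size cs <= \rank (kermx (joint_rsubmx Zs)))%N.
Proof.
move=> n_gt0 an_cs mult_cs.
have /fin_all_exists2 [y cs_y y_ker] : forall j : 'I_(size cs), exists2 y : 'rV_n,
    cs`_j = (a`_0)^-1 * qf a y & y *m joint_rsubmx Zs = 0.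
  by move=> j; apply/kernel_of_multiplier/mult_cs/mem_nth.
pose Y := \matrix_(j, k) y j 0 k.
have rowY j : row j Y = y j by apply/rowP => k; rewrite !mxE.
have /eqnP <- : row_free Y.
  by apply/(anisotropic_row_free n_gt0 erefl) => // j; rewrite rowY.
apply/mxrankS/sub_kermxP/row_matrixP => j.
by rewrite row_mul rowY y_ker row0.
Qed.

Lemma multipliers_of_rank : (0 < n)%N -> exists e, [/\ anisotropic e,
  size e = \rank (kermx (joint_rsubmx Zs)) & forall c, c \in e -> multiplier a c].
Proof.
move=> n_gt0; pose Y := row_base (kermx (joint_rsubmx Zs)).
pose e := [seq (a`_0)^-1 * qf a (row j Y) | j <- enum 'I_(\rank (kermx (joint_rsubmx Zs)))].
have size_e : size e = \rank (kermx (joint_rsubmx Zs)) by rewrite size_map size_enum_ord.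
exists e; split => //.
  apply/(anisotropic_row_free n_gt0 (esym size_e)); last exact: row_base_free.
  by move=> j; rewrite (nth_map j) ?nth_ord_enum // size_enum_ord.
move=> _ /mapP [j _ ->]; apply: multiplier_of_kernel.
have YM : Y *m joint_rsubmx Zs = 0 by apply/sub_kermxP; rewrite eq_row_base submx_refl.
by rewrite -row_mul YM row0.
Qed.

End LinearDescription.

End QuasilinearForm.

Lemma coord_products_map (R S : fieldType) (f : {rmorphism R -> S}) (a b : seq R) n m
    (Zs : 'I_n -> 'M_(n, n + m)) : coord_products a b Zs ->
  coord_products (map f a) (map f b) (fun i => map_mx f (Zs i)).
Proof.
move=> Zs_coord i k; rewrite -map_cat -map_row qf_map Zs_coord.
by rewrite !(nth_map0 _ _ (rmorph0 f)) !rmorphM fmorphV.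
Qed.

Section PolynomialEvaluation.
Variables (F K : fieldType) (iota : {rmorphism F -> K}).

Lemma mmap_unique n (phi : {rmorphism {mpoly F[n]} -> K}) (v : 'I_n -> K) :
  (forall c, phi c%:MP = iota c) -> (forall i, phi 'X_i = v i) -> phi =1 mmap iota v.
Proof.
move=> phiC phiX p; rewrite {1}(mpolyE p) rmorph_sum; apply: eq_bigr => m _.
rewrite -mul_mpolyC rmorphM phiC mpolyXE_id rmorph_prod; congr (_ * _).
by apply: eq_bigr => i _; rewrite rmorphXn phiX.
Qed.

Lemma meval_map_mpoly n (v : 'I_n -> K) p : (map_mpoly iota p).@[v] = mmap iota v p.
Proof.
apply: (@mmap_unique n (meval v \o map_mpoly iota)) => [c|i] /=.
  by rewrite map_mpolyC mevalC.
by rewrite map_mpolyX mevalXU.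
Qed.

Definition mrename n k (al : 'I_n -> 'I_k) (p : {mpoly F[n]}) : {mpoly F[k]} :=
  mmap (@mpolyC k F) (fun i => 'X_(al i)) p.

Lemma mmap_mrename n k (al : 'I_n -> 'I_k) (v : 'I_k -> K) p :
  mmap iota v (mrename al p) = mmap iota (fun i => v (al i)) p.
Proof.
apply: (@mmap_unique n (mmap iota v \o mrename al)) => [c|i] /=.
  by rewrite /mrename !mmapC.
by rewrite /mrename mmapX mmap1U mmapX mmap1U.
Qed.

Lemma mmap_eq n (v w : 'I_n -> K) p : v =1 w -> mmap iota v p = mmap iota w p.
Proof. by move=> vw; apply: eq_bigr => m _; rewrite (mmap1_eq _ vw). Qed.

Section Fractions.
Variables (I : Type) (t : I -> K).

Local Notation ev f := (mmap iota (fun i => t (f i))).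

Definition fraction x : Prop := exists n (f : 'I_n -> I) (p q : {mpoly F[n]}),
  ev f q != 0 /\ x * ev f q = ev f p.

Definition join_index n m (f : 'I_n -> I) (g : 'I_m -> I) (k : 'I_(n + m)) : I :=
  match split k with inl i => f i | inr j => g j end.

Lemma ev_join_indexl n m (f : 'I_n -> I) (g : 'I_m -> I) p :
  ev (join_index f g) (mrename (@lshift n m) p) = ev f p.
Proof.
rewrite mmap_mrename; apply: mmap_eq => i.
by rewrite /join_index (unsplitK (inl _ : 'I_n + 'I_m)).
Qed.

Lemma ev_join_indexr n m (f : 'I_n -> I) (g : 'I_m -> I) p :
  ev (join_index f g) (mrename (@rshift n m) p) = ev g p.
Proof.
rewrite mmap_mrename; apply: mmap_eq => i.
by rewrite /join_index (unsplitK (inr _ : 'I_n + 'I_m)).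
Qed.

Lemma fraction2 x y : fraction x -> fraction y ->
  exists n (f : 'I_n -> I) (p q p' q' : {mpoly F[n]}),
  [/\ ev f q != 0, x * ev f q = ev f p, ev f q' != 0 & y * ev f q' = ev f p'].
Proof.
move=> [n [f [p [q [q_neq0 xq]]]]] [m [g [p' [q' [q'_neq0 yq']]]]].
exists (n + m)%N, (join_index f g), (mrename (@lshift n m) p), (mrename (@lshift n m) q).
exists (mrename (@rshift n m) p'), (mrename (@rshift n m) q').
by rewrite !ev_join_indexl !ev_join_indexr.
Qed.

Lemma fractionB x y : fraction x -> fraction y -> fraction (x - y).
Proof.
move=> fx fy; have [n [f [p [q [p' [q' [q_neq0 xq q'_neq0 yq']]]]]]] := fraction2 fx fy.
exists n, f, (p * q' - p' * q), (q * q'); split; first by rewrite rmorphM mulf_neq0.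
by rewrite rmorphB !rmorphM /= -xq -yq'; ring.
Qed.

Lemma fractionM x y : fraction x -> fraction y -> fraction (x * y).
Proof.
move=> fx fy; have [n [f [p [q [p' [q' [q_neq0 xq q'_neq0 yq']]]]]]] := fraction2 fx fy.
exists n, f, (p * p'), (q * q'); split; first by rewrite rmorphM mulf_neq0.
by rewrite !rmorphM /= -xq -yq'; ring.
Qed.

Definition empty_index : 'I_0 -> I. Proof. by case. Defined.

Lemma fraction_const c : fraction (iota c).
Proof.
exists 0%N, empty_index, c%:MP, 1.
by rewrite rmorph1 oner_neq0 mulr1 mmapC.
Qed.

Lemma fractionV x : fraction x -> fraction x^-1.
Proof.
have [-> _|x_neq0] := eqVneq x 0.
  by rewrite invr0 -(rmorph0 iota); exact: fraction_const.
move=> [n [f [p [q [q_neq0 xq]]]]]; exists n, f, q, p.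
have p_neq0 : ev f p != 0 by rewrite -xq mulf_neq0.
by split => //; rewrite -xq mulKf.
Qed.

Lemma fraction_indet i : fraction (t i).
Proof.
exists 1%N, (fun=> i), 'X_ord0, 1.
by rewrite rmorph1 oner_neq0 mulr1 mmapX mmap1U.
Qed.

Lemma common_denominator m (x : 'I_m -> K) : (forall i, fraction (x i)) ->
  exists n (f : 'I_n -> I) (q : {mpoly F[n]}) (p : 'I_m -> {mpoly F[n]}),
    ev f q != 0 /\ forall i, x i * ev f q = ev f (p i).
Proof.
elim: m x => [|m IH] x fx.
  exists 0%N, empty_index, 1, (fun=> 0).
  by rewrite rmorph1 oner_neq0; split => // -[].
have [n [f [q [p [q_neq0 xq]]]]] := IH _ (fun i => fx (lift ord0 i)).
have [n' [g [p0 [q0 [q0_neq0 xq0]]]]] := fx ord0.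
exists (n + n')%N, (join_index f g), (mrename (@lshift n n') q * mrename (@rshift n n') q0).
exists (fun i => if unlift ord0 i is Some j
  then mrename (@lshift n n') (p j) * mrename (@rshift n n') q0
  else mrename (@rshift n n') p0 * mrename (@lshift n n') q).
rewrite rmorphM /= ev_join_indexl ev_join_indexr mulf_neq0 //; split => // i.
case: unliftP => [j ->|->]; rewrite !rmorphM /= ev_join_indexl ev_join_indexr.
  by rewrite mulrA xq.
by rewrite -xq0; ring.
Qed.

Lemma injective_factor n (f : 'I_n -> I) : exists k (h : 'I_k -> I) (al : 'I_n -> 'I_k),
  injective h /\ forall i, f i = h (al i).
Proof.
elim: n f => [|n IH] f; first by exists 0%N, f, id; split => // -[].
have [k [h [al [inj_h f_h]]]] := IH (fun i => f (lift ord0 i)).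
have [[j hj]|f0_new] := classic (exists j, h j = f ord0).
  exists k, h, (fun i => if unlift ord0 i is Some i' then al i' else j).
  by split => // i; case: unliftP => [i' ->|->] //; rewrite -f_h.
exists k.+1, (fun j => if unlift ord0 j is Some j' then h j' else f ord0).
exists (fun i => if unlift ord0 i is Some i' then lift ord0 (al i') else ord0); split.
  move=> j1 j2; case: unliftP => [j1' ->|->]; case: unliftP => [j2' ->|->] //.
  - by move/inj_h => ->.
  - by move=> e; case: f0_new; exists j1'.
  - by move=> e; case: f0_new; exists j2'.
by move=> i; case: (unliftP ord0 i) => [i' ->|->]; rewrite ?liftK ?unlift_none -?f_h.
Qed.

End Fractions.

End PolynomialEvaluation.

Lemma mcoeff_sqr_pchar2 (F : fieldType) (ch : 2%N \in [pchar F]) k (P : {mpoly F[k]}) m :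
  (P ^+ 2)@_(m *+ 2) = P@_m ^+ 2.
Proof.
have chP : 2%N \in [pchar {mpoly F[k]}] by exact: (rmorph_pchar (@mpolyC k F) ch).
rewrite {1}(mpolyE P) sqr_sum_pchar2 // raddf_sum /=.
have sq_coef u : ((P@_u *: 'X_[u]) ^+ 2)@_(m *+ 2) = P@_u ^+ 2 * (u == m)%:R.
  rewrite exprZn mpolyXn mcoeffZ mcoeffX; congr (_ * (nat_of_bool _)%:R).
  apply/eqP/eqP => [um|->] //; apply/mnmP => i.
  by have := congr1 (fun w : 'X_{1..k} => w i) um; rewrite /= !mulmnE !muln2 => /double_inj.
rewrite (eq_bigr _ (fun u _ => sq_coef u)).
have [m_supp|m_Nsupp] := boolP (m \in msupp P).
  rewrite (bigD1_seq m) ?msupp_uniq //= eqxx mulr1 big1 ?addr0 // => u /negbTE ->.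
  by rewrite mulr0.
rewrite big1_seq => [|u /andP [_ u_supp]].
  by move: m_Nsupp; rewrite mcoeff_msupp negbK => /eqP ->; rewrite expr0n.
have -> : (u == m) = false by apply: contraNF m_Nsupp => /eqP <-.
by rewrite mulr0.
Qed.

(* Compare the coefficients of the monomial X^(2 m) on both sides. *)
Lemma anisotropic_mpoly (F : fieldType) (ch : 2%N \in [pchar F]) (a : seq F) k
    (P : 'I_(size a) -> {mpoly F[k]}) :
  anisotropic a -> \sum_(i < size a) a`_i *: P i ^+ 2 = 0 -> forall i, P i = 0.
Proof.
move=> an_a aP i; apply/mpolyP => m; rewrite mcoeff0.
suff /an_a /rowP /(_ i) : qf a (\row_j (P j)@_m) = 0 by rewrite !mxE.
have := congr1 (mcoeff (m *+ 2)) aP; rewrite mcoeff0 raddf_sum /= => <-.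
by apply: eq_bigr => j _; rewrite mcoeffZ mcoeff_sqr_pchar2 // mxE.
Qed.

Lemma anisotropic_map_transcendental (F K : fieldType) (iota : {rmorphism F -> K})
    (a : seq F) : 2%N \in [pchar F] -> purely_transcendental iota ->
  anisotropic a -> anisotropic (map iota a).
Proof.
move=> ch [I [t [indep gen]]] an_a.
have fraction_all : forall z, fraction iota t z.
  by apply: gen; [exact: fraction_const | exact: fraction_indet | exact: fractionB
    | exact: fractionM | exact: fractionV].
apply/(anisotropicE (esym (size_map iota a))) => x qx.
have [n [f [q [p [q_neq0 xq]]]]] := common_denominator (fun i => fraction_all (x 0 i)).
have [k [h [al [inj_h f_h]]]] := injective_factor f.
have ev_al p' : mmap iota (fun i => t (f i)) p' = mmap iota (fun i => t (h i)) (mrename al p').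
  by rewrite mmap_mrename; apply: mmap_eq => i; rewrite f_h.
pose P i := mrename al (p i).
have sumP : \sum_(i < size a) a`_i *: P i ^+ 2 = 0.
  apply/eqP/negPn/negP => /(indep k h inj_h); rewrite meval_map_mpoly.
  suff -> : mmap iota (fun i => t (h i)) (\sum_(i < size a) a`_i *: P i ^+ 2) =
      mmap iota (fun i => t (f i)) q ^+ 2 * qf (map iota a) x by rewrite qx mulr0 eqxx.
  rewrite rmorph_sum /qf mulr_sumr; apply: eq_bigr => i _ /=.
  rewrite mmapZ rmorphXn /= -ev_al -xq (nth_map0 _ _ (rmorph0 iota)).
  by rewrite exprMn mulrA mulrC.
have P0 := anisotropic_mpoly ch an_a sumP.
apply/rowP => i; rewrite mxE; apply/eqP; rewrite -(mulIr_eq0 _ (mulIf q_neq0)).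
by rewrite xq ev_al -/(P i) P0 rmorph0.
Qed.

Lemma divisible_nil (F : fieldType) r : divisible_by_rfold_qpfister ([::] : seq F) r.
Proof.
exists (fun=> 0), [::]; rewrite /qf_tensor allpairs0r.
by split => //; exists 1%:M; rewrite ?unitmx1 // => x; rewrite mulmx1.
Qed.

Theorem lemma5p1 (F K : fieldType) (iota : {rmorphism F -> K})
  (phi : seq F) (r : nat) :
  (2%N \in [pchar F]) ->
  anisotropic phi ->
  purely_transcendental iota ->
  (0 < r)%N ->
  divisible_by_rfold_qpfister (map iota phi) r ->
  divisible_by_rfold_qpfister phi r.
Proof.
move=> ch an_phi pt _ [b [[|s0 s] iso_K]].
  case: iso_K; rewrite /qf_tensor allpairs0r size_map => /size0nil -> _.
  exact: divisible_nil.
have chK : 2%N \in [pchar K] by exact: rmorph_pchar ch.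
have anK := anisotropic_map_transcendental ch pt.
have [an_pi mult_pi] := multipliers_of_divisible chK (anK _ an_phi) iso_K.
have phi_gt0 : (0 < size phi)%N.
  case: iso_K; rewrite size_map size_allpairs size_quasi_pfister => -> _.
  by rewrite muln_gt0 expn_gt0.
have [c [Zs [an_ext Zs_coord]]] := coord_products_exist ch an_phi.
have [e [an_e size_e mult_e]] := multipliers_of_rank ch erefl erefl an_ext Zs_coord phi_gt0.
apply: (divisible_of_multipliers ch an_phi an_e _ mult_e); rewrite size_e.
have an_extK : anisotropic (map iota phi ++ map iota c) by rewrite -map_cat; exact: anK.
have := multipliers_size_le_rank chK (esym (size_map iota phi)) (esym (size_map iota c))
  an_extK (coord_products_map iota Zs_coord) phi_gt0 an_pi mult_pi.
by rewrite size_quasi_pfister -map_joint_rsubmx -map_kermx mxrank_map.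
Qed.
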